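(* Let $(X,(\cdot,\cdot|\cdot))$ be a 2-inner product space over $\mathbb{K}\in\{\mathbb{R},\mathbb{C}\}$, let $n$ be a positive integer, and let $x,y_1,\dots,y_n,z\in X$. Then \[ \sum_{i=1}^{n}\left|(x,y_i|z)\right|^2\le \|x|z\|^2\left\{\max_{1\le i\le n}\|y_i|z\|^2+(n-1)\max_{1\le i\ne j\le n}\left|(y_i,y_j|z)\right|\right\}. \]
   Context: A 2-inner product on a linear space $X$ of dimension greater than $1$ over $\mathbb{K}$ ($\mathbb{K}=\mathbb{R}$ or $\mathbb{C}$) is a function $(\cdot,\cdot|\cdot):X\times X\times X\to\mathbb{K}$ such that for all $x,x',y,z\in X$ and $\alpha\in\mathbb{K}$: (i) $(x,x|z)\ge 0$, and $(x,x|z)=0$ iff $x$ and $z$ are linearly dependent; (ii) $(x,x|z)=(z,z|x)$; (iii) $(y,x|z)=\overline{(x,y|z)}$; (iv) $(\alpha x,y|z)=\alpha(x,y|z)$; (v) $(x+x',y|z)=(x,y|z)+(x',y|z)$. The associated 2-norm is $\|x|z\|=\sqrt{(x,x|z)}$. The maximum $\max_{1\le i\ne j\le n}$ is over all pairs $(i,j)$ with $i\ne j$. *)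

From HB Require Import structures.
From mathcomp Require Import all_boot all_order all_algebra.
Set Implicit Arguments. Unset Strict Implicit. Unset Printing Implicit Defensive.
Import Order.TTheory GRing.Theory Num.Theory.
Local Open Scope ring_scope.

Definition lin_dep2 (K : numDomainType) (X : lmodType K) (x z : X) : Prop :=
  exists a b : K, (a != 0 \/ b != 0) /\ a *: x + b *: z = 0.

(* 2-inner product on X over K, with conjugation [conj] on K
   (conj = id for K real, conj = Num.conj for K complex).
   Includes the standing assumption dim X > 1. *)
Definition is_2inner_product (K : numDomainType) (conj : K -> K)
    (X : lmodType K) (ip : X -> X -> X -> K) : Prop :=
  (exists u v : X, ~ lin_dep2 u v) /\
  [/\       (forall x z : X, 0 <= ip x x z /\ (ip x x z = 0 <-> lin_dep2 x z)),
      (forall x z : X, ip x x z = ip z z x),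
      (forall x y z : X, ip y x z = conj (ip x y z)),
      (forall (a : K) (x y z : X), ip (a *: x) y z = a * ip x y z)
    & (forall x x' y z : X, ip (x + x') y z = ip x y z + ip x' y z)].

From HB Require Import structures.
From mathcomp Require Import all_boot all_order all_algebra.
From mathcomp Require Import ring.
Import Order.TTheory GRing.Theory Num.Theory.
Local Open Scope ring_scope.
Set Implicit Arguments.
Unset Strict Implicit.

(* Fix z: then u, v |-> (u,v|z) is a positive semidefinite Hermitian form, and
   only these properties are used.  With c_i := (x,y_i|z), S := sum |c_i|^2 and
   w := sum c_i y_i we get (w,x|z) = (x,w|z) = S, while |c_i||c_j| <=
   (|c_i|^2 + |c_j|^2)/2 and the symmetry of |(y_i,y_j|z)| give
   (w,w|z) <= S * max_i sum_j |(y_i,y_j|z)| <= S * M, each row sum being at most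
   the diagonal maximum plus (n-1) times the off-diagonal maximum.  Hence
   0 <= (x - t w, x - t w|z) <= ||x|z||^2 - 2tS + t^2 S M for all t >= 0, which
   forces S <= ||x|z||^2 M. *)

Lemma real_le_bigmax_seq (R : numDomainType) (I : eqType) (r : seq I)
    (P : pred I) (F : I -> R) j :
  (forall i, P i -> F i \is Num.real) -> j \in r -> P j ->
  F j <= \big[Num.max/0]_(i <- r | P i) F i.
Proof.
move=> F_real; elim: r => // a r IHr; rewrite inE big_cons.
have rest_real : \big[Num.max/0]_(i <- r | P i) F i \is Num.real.
  by apply: bigmax_real => // i /F_real.
have [-> _ Pa|j_neq_a /= jr Pj] := eqVneq j a.
  by rewrite Pa comparable_le_max ?lexx // real_comparable ?F_real.
have le_rest := IHr jr Pj; case: ifP => // Pa.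
by rewrite comparable_le_max ?le_rest ?orbT // real_comparable ?F_real.
Qed.

Lemma le_mul_of_quadratic_ge0 (K : numFieldType) (a b c : K) :
  0 <= b -> 0 <= c ->
  (forall t, 0 <= t -> 0 <= a - t * b *+ 2 + t ^+ 2 * (b * c)) ->
  b <= a * c.
Proof.
move=> b_ge0 c_ge0 q_ge0.
have a_ge0 : 0 <= a.
  by have := q_ge0 0 (lexx 0); rewrite !mul0r mul0rn subr0 expr0n mul0r addr0.
have [->|b_neq0] := eqVneq b 0; first by rewrite mulr_ge0.
have [c0|c_neq0] := eqVneq c 0.
  have t_ge0 : 0 <= (a + 1) / (b *+ 2).
    by rewrite divr_ge0 ?addr_ge0 ?mulrn_wge0.
  have := q_ge0 _ t_ge0; rewrite c0 mulr0 mulr0 addr0.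
  have -> : a - (a + 1) / (b *+ 2) * b *+ 2 = -1 by field.
  by rewrite ler0N1.
have c_gt0 : 0 < c by rewrite lt_def c_neq0.
have cV_ge0 : 0 <= c^-1 by rewrite invr_ge0.
have := q_ge0 _ cV_ge0.
have -> : a - c^-1 * b *+ 2 + c^-1 ^+ 2 * (b * c) = a - b / c by field.
by rewrite subr_ge0 ler_pdivrMr.
Qed.

Lemma sum_sym_quad_le (R : numDomainType) (I : finType) (u : I -> R)
    (g : I -> I -> R) :
  (forall i, u i \is Num.real) -> (forall i j, 0 <= g i j) ->
  (forall i j, g i j = g j i) ->
  \sum_i \sum_j u i * u j * g i j <= \sum_i u i ^+ 2 * \sum_j g i j.
Proof.
move=> u_real g_ge0 g_sym.
set rhs := \sum_i u i ^+ 2 * _.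
suff: (\sum_i \sum_j u i * u j * g i j) *+ 2 <= rhs *+ 2.
  by rewrite lerMn2r.
have rhs_swap : rhs = \sum_i \sum_j u j ^+ 2 * g i j.
  rewrite exchange_big; apply: eq_bigr => i _; rewrite mulr_sumr.
  by apply: eq_bigr => j _; rewrite g_sym.
have -> : rhs *+ 2 = \sum_i \sum_j (u i ^+ 2 + u j ^+ 2) * g i j.
  rewrite mulr2n {2}rhs_swap -big_split; apply: eq_bigr => i _.
  by rewrite mulr_sumr -big_split; apply: eq_bigr => j _; rewrite mulrDl.
rewrite -sumrMnl; apply: ler_sum => i _; rewrite -sumrMnl.
apply: ler_sum => j _; rewrite -mulrnAl ler_wpM2r //.
exact: (real_leif_mean_square_scaled (u_real i) (u_real j)).1.
Qed.

Lemma row_sum_le_max_diag_offdiag (R : numDomainType) n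
    (g : 'I_n -> 'I_n -> R) i :
  (forall k l, g k l \is Num.real) ->
  \sum_j g i j <= \big[Num.max/0]_k g k k
                  + n.-1%:R * \big[Num.max/0]_k \big[Num.max/0]_(l | l != k) g k l.
Proof.
move=> g_real; rewrite (bigD1 i) //=; apply: lerD.
  by apply: real_le_bigmax_seq; rewrite ?mem_index_enum.
set B := \big[Num.max/0]_k _.
have -> : n.-1%:R * B = \sum_(j | j != i) B.
  by rewrite sumr_const cardC1 card_ord mulr_natl.
apply: ler_sum => j j_neq_i.
apply: le_trans (_ : \big[Num.max/0]_(l | l != i) g i l <= B).
  by apply: real_le_bigmax_seq; rewrite ?mem_index_enum.
apply: real_le_bigmax_seq; rewrite ?mem_index_enum // => k _.
exact: bigmax_real.
Qed.

Section HermitianForm.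

Variables (K : numFieldType) (cj : {rmorphism K -> K}).
Hypothesis cj_normK : forall c : K, `|c| ^+ 2 = c * cj c.
Hypothesis cj_norm : forall c : K, `|cj c| = `|c|.
Hypothesis cj_ge0 : forall c : K, 0 <= c -> cj c = c.

Variables (X : lmodType K) (form : X -> X -> K).
Hypothesis form_ge0 : forall x, 0 <= form x x.
Hypothesis formC : forall x y, form y x = cj (form x y).
Hypothesis formZl : forall a x y, form (a *: x) y = a * form x y.
Hypothesis formDl : forall x x' y, form (x + x') y = form x y + form x' y.

Lemma form_suml (I : Type) (r : seq I) (P : pred I) (f : I -> X) y :
  form (\sum_(i <- r | P i) f i) y = \sum_(i <- r | P i) form (f i) y.
Proof.
have form0l : form 0 y = 0 by rewrite -(scale0r 0) formZl mul0r.
exact: (big_morph (form^~ y) (fun u v => formDl u v y) form0l).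
Qed.

Lemma formZr a x y : form x (a *: y) = cj a * form x y.
Proof. by rewrite formC formZl rmorphM -formC. Qed.

Lemma formDr x y y' : form x (y + y') = form x y + form x y'.
Proof. by rewrite formC formDl rmorphD -!formC. Qed.

Lemma form_sumr (I : Type) (r : seq I) (P : pred I) (f : I -> X) x :
  form x (\sum_(i <- r | P i) f i) = \sum_(i <- r | P i) form x (f i).
Proof.
by rewrite formC form_suml rmorph_sum; under eq_bigr do rewrite -formC.
Qed.

Lemma form_subZ t x w : 0 <= t ->
  form (x - t *: w) (x - t *: w)
  = form x x - t * (form x w + form w x) + t ^+ 2 * form w w.
Proof.
move=> t_ge0; rewrite -scaleNr formDl !formDr !formZl !formZr rmorphN cj_ge0 //.
ring.
Qed.

Lemma form_lincomb_le (I : finType) (c : I -> K) (y : I -> X) :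
  form (\sum_i c i *: y i) (\sum_i c i *: y i) <=
  \sum_i `|c i| ^+ 2 * \sum_j `|form (y i) (y j)|.
Proof.
have norm_sym i j : `|form (y i) (y j)| = `|form (y j) (y i)|.
  by rewrite formC cj_norm.
apply: le_trans (sum_sym_quad_le (fun i => normr_real (c i))
                   (fun i j => normr_ge0 (form (y i) (y j))) norm_sym).
rewrite -(ger0_norm (form_ge0 _)) {1}form_suml.
apply: le_trans (ler_norm_sum _ _ _) _.
apply: ler_sum => i _; rewrite formZl form_sumr normrM.
apply: le_trans (ler_wpM2l (normr_ge0 _) (ler_norm_sum _ _ _)) _.
rewrite mulr_sumr; apply: ler_sum => j _.
by rewrite formZr normrM cj_norm mulrA.
Qed.

Lemma sum_normr_form_sqr_le (I : finType) (x : X) (y : I -> X) (M : K) :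
  0 <= M -> (forall i, \sum_j `|form (y i) (y j)| <= M) ->
  \sum_i `|form x (y i)| ^+ 2 <= form x x * M.
Proof.
move=> M_ge0 row_le; set S := \sum_i _.
have S_ge0 : 0 <= S by apply: sumr_ge0 => i _; rewrite exprn_ge0.
pose w := \sum_i form x (y i) *: y i.
have form_xw : form x w = S.
  by rewrite form_sumr; apply: eq_bigr => i _; rewrite formZr cj_normK mulrC.
have form_wx : form w x = S by rewrite formC form_xw cj_ge0.
have form_ww : form w w <= S * M.
  apply: le_trans (form_lincomb_le _ _) _; rewrite /S mulr_suml.
  by apply: ler_sum => i _; rewrite ler_wpM2l ?exprn_ge0.
apply: le_mul_of_quadratic_ge0 => // t t_ge0.
apply: le_trans (form_ge0 (x - t *: w)) _.
rewrite form_subZ // form_xw form_wx -mulr2n mulrnAr lerD2l.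
by rewrite ler_wpM2l ?exprn_ge0.
Qed.

End HermitianForm.

Lemma sum_normr_2inner_sqr_le (K : numFieldType) (cj : {rmorphism K -> K})
    (X : lmodType K) (ip : X -> X -> X -> K) :
  (forall c : K, `|c| ^+ 2 = c * cj c) ->
  (forall c : K, `|cj c| = `|c|) ->
  (forall c : K, 0 <= c -> cj c = c) ->
  is_2inner_product cj ip ->
  forall n, (0 < n)%N -> forall (x : X) (y : 'I_n -> X) (z : X),
    \sum_(i < n) `|ip x (y i) z| ^+ 2
    <= ip x x z *
       (\big[Num.max/0]_(i < n) ip (y i) (y i) z
        + (n.-1)%:R * \big[Num.max/0]_(i < n) \big[Num.max/0]_(j < n | j != i)
             `|ip (y i) (y j) z|).
Proof.
move=> cj_normK cj_norm cj_ge0 [_ [ip_ge0 _ ipC ipZl ipDl]] n n_gt0 x y z.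
have diag_norm : \big[Num.max/0]_(i < n) ip (y i) (y i) z
                 = \big[Num.max/0]_(i < n) `|ip (y i) (y i) z|.
  by apply: eq_bigr => i _; rewrite ger0_norm //; case: (ip_ge0 (y i) z).
have row_le i := row_sum_le_max_diag_offdiag i
  (fun k l => normr_real (ip (y k) (y l) z)).
have form_ge0 u : 0 <= ip u u z by case: (ip_ge0 u z).
rewrite diag_norm; apply: (sum_normr_form_sqr_le (form := fun u v => ip u v z)
  cj_normK cj_norm cj_ge0 form_ge0 (fun u v => ipC u v z)
  (fun a u v => ipZl a u v z) (fun u u' v => ipDl u u' v z) x _ row_le).
exact: le_trans (sumr_ge0 _ (fun j _ => normr_ge0 _)) (row_le (Ordinal n_gt0)).
Qed.

Theorem mainTheorem3 :
  (* real case: K any real field (e.g. R) *)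
  (forall (K : realFieldType) (X : lmodType K) (ip : X -> X -> X -> K),
     is_2inner_product id ip ->
     forall (n : nat), (0 < n)%N ->
     forall (x : X) (y : 'I_n -> X) (z : X),
       \sum_(i < n) `|ip x (y i) z| ^+ 2
       <= ip x x z *
          (\big[Num.max/0]_(i < n) ip (y i) (y i) z
           + (n.-1)%:R * \big[Num.max/0]_(i < n) \big[Num.max/0]_(j < n | j != i)
                `|ip (y i) (y j) z|))
  /\
  (* complex case: K any numeric closed field (e.g. C) with its conjugation *)
  (forall (K : numClosedFieldType) (X : lmodType K) (ip : X -> X -> X -> K),
     is_2inner_product Num.conj ip ->
     forall (n : nat), (0 < n)%N ->
     forall (x : X) (y : 'I_n -> X) (z : X),
       \sum_(i < n) `|ip x (y i) z| ^+ 2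
       <= ip x x z *
          (\big[Num.max/0]_(i < n) ip (y i) (y i) z
           + (n.-1)%:R * \big[Num.max/0]_(i < n) \big[Num.max/0]_(j < n | j != i)
                `|ip (y i) (y j) z|)).
Proof.
split=> K X ip.
  apply: (@sum_normr_2inner_sqr_le K (idfun : {rmorphism K -> K})) => // c.
  by rewrite real_normK ?num_real // expr2.
apply: (@sum_normr_2inner_sqr_le K (Num.conj : {rmorphism K -> K})).
- exact: normCK.
- exact: norm_conjC.
- by move=> c; apply: geC0_conj.
Qed.
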